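(* Let $L \ge N$ be positive integers, let $\mathbf{T} \in \mathbb{R}^{L\times N}$ have full rank $N$, and let $\gamma>0$. Equip $\mathbb{R}^N$ with the scalar product $\langle \mathbf{x},\mathbf{y}\rangle_{\mathbf{T}} := \mathbf{x}^{T}\mathbf{T}^{*}\mathbf{T}\mathbf{y}$ and norm $\|\mathbf{x}\|_{\mathbf{T}} := \|\mathbf{T}\mathbf{x}\|_2$. Then the operator $\mathbf{T}^{\dagger} S_\gamma \mathbf{T}:\mathbb{R}^N\to\mathbb{R}^N$ is the proximity operator, with respect to this scalar product, of a proper, lower semi-continuous, convex function $\Phi:\mathbb{R}^N\to\mathbb{R}\cup\{+\infty\}$; that is, for every $\mathbf{z}\in\mathbb{R}^N$, $$\mathbf{T}^{\dagger} S_\gamma (\mathbf{T}\mathbf{z}) = \operatorname*{argmin}_{\mathbf{x}\in\mathbb{R}^N}\Big\{\tfrac12\|\mathbf{z}-\mathbf{x}\|_{\mathbf{T}}^2 + \Phi(\mathbf{x})\Big\}.$$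
   Context: $\mathbf{T}^{*}$ denotes the transpose of $\mathbf{T}$ and $\mathbf{T}^{\dagger} = (\mathbf{T}^{*}\mathbf{T})^{-1}\mathbf{T}^{*}$ its Moore–Penrose inverse. $S_\gamma:\mathbb{R}^L\to\mathbb{R}^L$ is the componentwise soft shrinkage operator: $[S_\gamma(\mathbf{y})]_j = y_j-\gamma$ if $y_j\ge\gamma$, $y_j+\gamma$ if $y_j\le-\gamma$, and $0$ if $|y_j|<\gamma$. Equivalently, the conclusion says: $\mathbf{x}=\mathbf{T}^{\dagger}S_\gamma\mathbf{T}\mathbf{z}$ if and only if $\mathbf{z}-\mathbf{x}$ lies in the subdifferential of $\Phi$ at $\mathbf{x}$ taken with respect to $\langle\cdot,\cdot\rangle_{\mathbf{T}}$, i.e. $\langle \mathbf{z}-\mathbf{x}, \tilde{\mathbf{x}}-\mathbf{x}\rangle_{\mathbf{T}} \le \Phi(\tilde{\mathbf{x}})-\Phi(\mathbf{x})$ for all $\tilde{\mathbf{x}}$. *)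

From HB Require Import structures.
From mathcomp Require Import all_boot all_order all_algebra.
From mathcomp Require Import all_classical all_reals all_analysis.
Set Implicit Arguments. Unset Strict Implicit. Unset Printing Implicit Defensive.
Import Order.TTheory GRing.Theory Num.Theory.
Local Open Scope classical_set_scope.
Local Open Scope ring_scope.

Definition soft_shrink (R : realType) (L : nat) (gamma : R) (y : 'cV[R]_L) : 'cV[R]_L :=
  \col_j (if gamma <= y j 0 then y j 0 - gamma
          else if y j 0 <= - gamma then y j 0 + gamma else 0).

(* Moore--Penrose inverse of a full column rank matrix: (T^* T)^{-1} T^*. *)
Definition mp_inv (R : realType) (L N : nat) (T : 'M[R]_(L, N)) : 'M[R]_(N, L) :=
  invmx (T^T *m T) *m T^T.

Definition scalT (R : realType) (L N : nat) (T : 'M[R]_(L, N)) (x y : 'cV[R]_N) : R :=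
  (x^T *m T^T *m T *m y) 0 0.

Definition normT2 (R : realType) (L N : nat) (T : 'M[R]_(L, N)) (x : 'cV[R]_N) : R :=
  scalT T x x.

Definition proper_fun (R : realType) (X : Type) (f : X -> \bar R) : Prop :=
  (forall x, f x != -oo%E) /\ (exists x, f x != +oo%E).

Definition convex_fun (R : realType) (N : nat) (f : 'cV[R]_N -> \bar R) : Prop :=
  forall (x y : 'cV[R]_N) (t : R), 0 < t -> t < 1 ->
    (f (t *: x + (1 - t) *: y)%R <= t%:E * f x + (1 - t)%:E * f y)%E.

Definition argmin (X : Type) (R : realType) (g : X -> \bar R) : set X :=
  [set x | forall y, (g x <= g y)%E].

From HB Require Import structures.
From mathcomp Require Import all_boot all_order all_algebra.
From mathcomp Require Import all_classical all_reals all_analysis.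
From mathcomp Require Import lra ring.
Import Order.TTheory GRing.Theory Num.Theory.
Import numFieldNormedType.Exports.
Local Open Scope classical_set_scope.
Local Open Scope ring_scope.

Set Implicit Arguments.
Unset Strict Implicit.
Unset Printing Implicit Defensive.

(** Decompose R^L as the range of T plus its orthogonal complement [T^T w = 0]:
    every y is uniquely T x + w with x = T^dagger y.  Let
    Phi x := inf_{T^T w = 0} (gamma ||T x + w||_1 + 1/2 ||w||^2).
    By Pythagoras, 1/2 ||z - x||_T^2 + gamma ||T x + w||_1 + 1/2 ||w||^2 is the
    l1-proximity objective 1/2 ||T z - y||^2 + gamma ||y||_1 at y = T x + w, which
    grows at least like 1/2 ||y - S_gamma(T z)||^2 away from its minimizer
    S_gamma(T z).  Taking the infimum over w, the objective in x is minimized exactly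
    at T^dagger S_gamma(T z), uniquely since T is injective.  Phi is convex as a
    partial minimization of a jointly convex function over a subspace, and Lipschitz,
    hence lower semicontinuous. *)

Section column_norms.
Variable R : realFieldType.

Definition sqnorm {n} (v : 'cV[R]_n) : R := \sum_i v i 0 ^+ 2.
Definition norm1 {n} (v : 'cV[R]_n) : R := \sum_i `|v i 0|.

Lemma sqnorm_ge0 n (v : 'cV[R]_n) : 0 <= sqnorm v.
Proof. by apply: sumr_ge0 => i _; rewrite sqr_ge0. Qed.

Lemma sqnorm_le0 n (v : 'cV[R]_n) : sqnorm v <= 0 -> v = 0.
Proof.
move=> v_le0; have /eqP v0 : sqnorm v == 0 by rewrite eq_le v_le0 sqnorm_ge0.
apply/matrixP => i j; rewrite (ord1 j) mxE.
have /(_ i isT) /eqP := psumr_eq0P (fun k _ => sqr_ge0 (v k 0)) v0.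
by rewrite sqrf_eq0 => /eqP.
Qed.

Lemma sqnormE n (v : 'cV[R]_n) : (v^T *m v) 0 0 = sqnorm v.
Proof. by rewrite mxE; apply: eq_bigr => i _; rewrite mxE expr2. Qed.

Lemma sqnormN n (v : 'cV[R]_n) : sqnorm (- v) = sqnorm v.
Proof. by apply: eq_bigr => i _; rewrite mxE sqrrN. Qed.

Lemma sqnormD_orth n (u v : 'cV[R]_n) : (u^T *m v) 0 0 = 0 ->
  sqnorm (u + v) = sqnorm u + sqnorm v.
Proof.
rewrite mxE /sqnorm => uv0.
transitivity (\sum_i (u i 0 ^+ 2 + v i 0 ^+ 2 + 2 * (u^T 0 i * v i 0))).
  by apply: eq_bigr => i _; rewrite !mxE; ring.
by rewrite !big_split /= -mulr_sumr uv0 mulr0 addr0.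
Qed.

Lemma ler_norm1D n (u v : 'cV[R]_n) : norm1 (u + v) <= norm1 u + norm1 v.
Proof. by rewrite -big_split /=; apply: ler_sum => i _; rewrite mxE ler_normD. Qed.

Lemma norm1_convex n (u v : 'cV[R]_n) t : 0 <= t <= 1 ->
  norm1 (t *: u + (1 - t) *: v) <= t * norm1 u + (1 - t) * norm1 v.
Proof.
case/andP=> t0 t1; have t'0 : 0 <= 1 - t by rewrite subr_ge0.
rewrite !mulr_sumr -big_split /=; apply: ler_sum => i _; rewrite !mxE.
by apply: le_trans (ler_normD _ _) _; rewrite !normrM (ger0_norm t0) (ger0_norm t'0).
Qed.

Lemma sqnorm_convex n (u v : 'cV[R]_n) t : 0 <= t <= 1 ->
  sqnorm (t *: u + (1 - t) *: v) <= t * sqnorm u + (1 - t) * sqnorm v.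
Proof.
case/andP=> t0 t1; rewrite !mulr_sumr -big_split /=; apply: ler_sum => i _.
rewrite !mxE; set a := u i 0; set b := v i 0.
have : 0 <= t * (1 - t) * (a - b) ^+ 2.
  by rewrite mulr_ge0 ?sqr_ge0 // mulr_ge0 // subr_ge0.
nra.
Qed.

Lemma norm1_mulmx_le m n (A : 'M[R]_(m, n)) (v : 'cV[R]_n) d :
  (forall k, `|v k 0| <= d) -> norm1 (A *m v) <= (\sum_i \sum_k `|A i k|) * d.
Proof.
move=> v_le; rewrite /norm1 mulr_suml; apply: ler_sum => i _.
rewrite mxE mulr_suml; apply: le_trans (ler_norm_sum _ _ _) _.
by apply: ler_sum => k _; rewrite normrM ler_wpM2l.
Qed.

Lemma full_col_rank_inj m n (A : 'M[R]_(m, n)) (v : 'cV[R]_n) :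
  \rank A = n -> A *m v = 0 -> v = 0.
Proof.
move=> rkA Av0; have free_At : row_free A^T by rewrite /row_free mxrank_tr rkA.
apply: trmx_inj; rewrite trmx0; apply: (row_free_inj free_At).
by rewrite -trmx_mul Av0 trmx0 mul0mx.
Qed.

Lemma gram_unitmx m n (A : 'M[R]_(m, n)) : \rank A = n -> A^T *m A \in unitmx.
Proof.
move=> rkA; rewrite -row_free_unit; apply: inj_row_free => v vAA0.
have : sqnorm (A *m v^T) <= 0.
  by rewrite -sqnormE trmx_mul trmxK mulmxA -(mulmxA v) vAA0 mul0mx mxE.
move/sqnorm_le0/(full_col_rank_inj rkA)/(congr1 trmx).
by rewrite trmxK trmx0.
Qed.

(* Strong convexity of t |-> 1/2 (a - t)^2 + g |t| at its minimizer s. *)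
Lemma soft_threshold_ineq (g a t : R) : 0 < g ->
  let s := if g <= a then a - g else if a <= - g then a + g else 0 in
  2^-1 * (a - s) ^+ 2 + g * `|s| + 2^-1 * (t - s) ^+ 2
    <= 2^-1 * (a - t) ^+ 2 + g * `|t|.
Proof.
move=> g0 /=; have [t0|t0] := lerP 0 t; rewrite ?(ger0_norm t0) ?(ltr0_norm t0);
  (case: ifP => h1; first by rewrite ger0_norm ?subr_ge0 //; nra);
  (case: ifP => h2; first by rewrite ler0_norm; nra);
  by rewrite normr0; move: h1 h2 => /negbT + /negbT; rewrite -!ltNge; nra.
Qed.

End column_norms.

Lemma argmin_EFin (X : Type) (R : realType) (f : X -> R) :
  argmin (fun x => (f x)%:E) = [set x | forall y, f x <= f y].
Proof. by apply/seteqP; split=> x /= min_x y; [rewrite -lee_fin | rewrite lee_fin]. Qed.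

Lemma lipschitz_lower_semicontinuous (R : realType) m n (f : 'M[R]_(m, n) -> R) (C : R) :
  (forall (x y : 'M[R]_(m, n)) d,
    (forall i j, `|x i j - y i j| <= d) -> f x - C * d <= f y) ->
  lower_semicontinuous (fun x => (f x)%:E).
Proof.
move=> f_lip x a; rewrite lte_fin -subr_gt0 => e_gt0.
set d := (f x - a) / (`|C| + 1).
have C1_gt0 : 0 < `|C| + 1 by rewrite ltr_wpDl.
have d_gt0 : 0 < d by rewrite divr_gt0.
have Cd_lt : C * d < f x - a.
  rewrite (le_lt_trans (ler_wpM2r (ltW d_gt0) (ler_norm C))) //.
  by rewrite /d mulrA ltr_pdivrMr //; nra.
exists (ball x d); first exact: nbhsx_ballx.
move=> y [_ /= xy_lt]; rewrite lte_fin.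
have := f_lip x y d (fun i j => ltW (xy_lt i j)); lra.
Qed.

Lemma normT2E (R : realType) L N (T : 'M[R]_(L, N)) (x : 'cV[R]_N) :
  normT2 T x = sqnorm (T *m x).
Proof. by rewrite /normT2 /scalT -sqnormE trmx_mul !mulmxA. Qed.

Section soft_shrink_prox.
Variables (R : realType) (gamma : R).
Hypothesis gamma_gt0 : 0 < gamma.

Definition l1_prox_cost L (a y : 'cV[R]_L) : R :=
  2^-1 * sqnorm (a - y) + gamma * norm1 y.

Lemma soft_shrink_prox L (a y : 'cV[R]_L) :
  l1_prox_cost a (soft_shrink gamma a) + 2^-1 * sqnorm (y - soft_shrink gamma a)
    <= l1_prox_cost a y.
Proof.
rewrite /l1_prox_cost /sqnorm /norm1 !mulr_sumr -!big_split /=.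
by apply: ler_sum => j _; rewrite !mxE; apply: soft_threshold_ineq.
Qed.

End soft_shrink_prox.

Section shrinkage_potential.
Variables (R : realType) (L N : nat) (T : 'M[R]_(L, N)) (gamma : R).
Hypothesis gamma_gt0 : 0 < gamma.

Definition range_orth := [set w : 'cV[R]_L | T^T *m w = 0].

Definition fibre_cost (x : 'cV[R]_N) (w : 'cV[R]_L) : R :=
  gamma * norm1 (T *m x + w) + 2^-1 * sqnorm w.

Definition phi (x : 'cV[R]_N) : R := inf [set fibre_cost x w | w in range_orth].

Lemma fibre_cost_ge0 x w : 0 <= fibre_cost x w.
Proof.
by rewrite addr_ge0 ?mulr_ge0 ?sqnorm_ge0 ?invr_ge0 ?sumr_ge0 // ltW.
Qed.

Lemma phi_le x w : range_orth w -> phi x <= fibre_cost x w.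
Proof.
move=> Tw0; apply: ge_inf; last by exists w.
by exists 0 => _ [v _ <-]; apply: fibre_cost_ge0.
Qed.

Lemma ler_mul_phi m k x : 0 < k ->
  (forall w, range_orth w -> m <= k * fibre_cost x w) -> m <= k * phi x.
Proof.
move=> k_gt0 le_m; rewrite -ler_pdivrMl //; apply: lb_le_inf.
  by exists (fibre_cost x 0), 0 => //; apply: mulmx0.
by move=> _ [w Tw0 <-]; rewrite ler_pdivrMl // le_m.
Qed.

Lemma fibre_cost_convex x1 x2 w1 w2 t : 0 <= t <= 1 ->
  fibre_cost (t *: x1 + (1 - t) *: x2) (t *: w1 + (1 - t) *: w2)
    <= t * fibre_cost x1 w1 + (1 - t) * fibre_cost x2 w2.
Proof.
move=> t01; have g0 := ltW gamma_gt0; rewrite /fibre_cost.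
have -> : T *m (t *: x1 + (1 - t) *: x2) + (t *: w1 + (1 - t) *: w2) =
          t *: (T *m x1 + w1) + (1 - t) *: (T *m x2 + w2).
  by rewrite mulmxDr -!scalemxAr !scalerDr addrACA.
have := norm1_convex (T *m x1 + w1) (T *m x2 + w2) t01.
have := sqnorm_convex w1 w2 t01.
nra.
Qed.

Lemma phi_convex x1 x2 t : 0 < t < 1 ->
  phi (t *: x1 + (1 - t) *: x2) <= t * phi x1 + (1 - t) * phi x2.
Proof.
case/andP=> t_gt0 t_lt1; have t'_gt0 : 0 < 1 - t by rewrite subr_gt0.
have t01 : 0 <= t <= 1 by rewrite !ltW.
rewrite -lerBlDl; apply: ler_mul_phi => // w2 Tw2.
rewrite lerBlDl -lerBlDr; apply: ler_mul_phi => // w1 Tw1.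
rewrite lerBlDr; apply: le_trans (fibre_cost_convex _ _ _ _ t01).
by apply: phi_le; rewrite /range_orth /= mulmxDr -!scalemxAr Tw1 Tw2 !scaler0 addr0.
Qed.

Lemma phi_lipschitz x y : phi x - gamma * norm1 (T *m (x - y)) <= phi y.
Proof.
rewrite -[phi y]mul1r; apply: ler_mul_phi => // w Tw0.
rewrite mul1r lerBlDr; apply: le_trans (phi_le _ Tw0) _; rewrite /fibre_cost.
have -> : T *m x + w = (T *m y + w) + T *m (x - y).
  by rewrite mulmxBr addrCA addrAC subrr add0r.
have := ler_norm1D (T *m y + w) (T *m (x - y)).
have := ltW gamma_gt0; nra.
Qed.

Lemma phi_lower_semicontinuous : lower_semicontinuous (fun x => (phi x)%:E).
Proof.
apply: (@lipschitz_lower_semicontinuous _ _ _ _ (gamma * \sum_i \sum_k `|T i k|)).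
move=> x y d xy_le; rewrite -mulrA; apply: le_trans (phi_lipschitz x y).
rewrite lerD2l lerN2 ler_wpM2l ?(ltW gamma_gt0) //.
by apply: norm1_mulmx_le => k; rewrite !mxE.
Qed.

Lemma prox_objective_fibre z x w : range_orth w ->
  2^-1 * normT2 T (z - x) + fibre_cost x w = l1_prox_cost gamma (T *m z) (T *m x + w).
Proof.
move=> Tw0; rewrite /l1_prox_cost /fibre_cost normT2E.
have -> : T *m z - (T *m x + w) = T *m (z - x) + (- w) by rewrite mulmxBr opprD addrA.
rewrite sqnormD_orth ?sqnormN; first by ring.
by rewrite trmx_mul -mulmxA mulmxN Tw0 oppr0 mulmx0 mxE.
Qed.

Definition prox_objective (z x : 'cV[R]_N) : R := 2^-1 * normT2 T (z - x) + phi x.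

Hypothesis rankT : \rank T = N.

Lemma range_orth_residual (y : 'cV[R]_L) : range_orth (y - T *m (mp_inv T *m y)).
Proof.
by rewrite /range_orth /mp_inv /= mulmxBr !mulmxA mulmxV ?mul1mx ?subrr ?gram_unitmx.
Qed.

Section prox_point.
Variable z : 'cV[R]_N.
Let a := T *m z.
Let s := soft_shrink gamma a.
Let xs := mp_inv T *m s.

Lemma prox_objective_le : prox_objective z xs <= l1_prox_cost gamma a s.
Proof.
have Tres := range_orth_residual s.
rewrite -[X in l1_prox_cost _ _ X](subrKC (T *m xs)) -prox_objective_fibre //.
by rewrite lerD2l phi_le.
Qed.

Lemma prox_objective_ge x :
  l1_prox_cost gamma a s + 2^-1 * normT2 T (x - xs) <= prox_objective z x.
Proof.
rewrite /prox_objective -lerBlDl -[phi x]mul1r; apply: ler_mul_phi => // w Tw0.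
rewrite mul1r lerBlDl prox_objective_fibre // normT2E.
apply: le_trans (soft_shrink_prox gamma_gt0 _ _); rewrite lerD2l ler_wpM2l ?invr_ge0 //.
set r := s - T *m xs.
have -> : T *m x + w - s = T *m (x - xs) + (w - r).
  by rewrite /r mulmxBr; apply/matrixP => i j; rewrite !mxE; ring.
rewrite sqnormD_orth ?lerDl ?sqnorm_ge0 //.
by rewrite trmx_mul -mulmxA mulmxBr Tw0 (range_orth_residual s) subrr mulmx0 mxE.
Qed.

Lemma prox_objective_argmin :
  [set x | forall y, prox_objective z x <= prox_objective z y] = [set xs].
Proof.
apply/seteqP; split => [x /= x_min | _ ->] /=; last first.
  move=> y; apply: le_trans prox_objective_le (le_trans _ (prox_objective_ge y)).
  by rewrite lerDl mulr_ge0 ?invr_ge0 ?normT2E ?sqnorm_ge0.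
have := le_trans (prox_objective_ge x) (le_trans (x_min xs) prox_objective_le).
rewrite gerDl pmulr_rle0 ?invr_gt0 // normT2E => /sqnorm_le0 /(full_col_rank_inj rankT).
by move/eqP; rewrite subr_eq0 => /eqP.
Qed.

End prox_point.

End shrinkage_potential.

Theorem theorem3p5 (R : realType) (L N : nat) (T : 'M[R]_(L, N)) (gamma : R) :
  (0 < N)%N -> (N <= L)%N -> \rank T = N -> 0 < gamma ->
  exists Phi : 'cV[R]_N -> \bar R,
    [/\ proper_fun Phi, lower_semicontinuous Phi, convex_fun Phi &
      forall z : 'cV[R]_N,
        argmin (fun x : 'cV[R]_N => ((2^-1 * normT2 T (z - x))%:E + Phi x)%E)
        = [set mp_inv T *m soft_shrink gamma (T *m z)]].
Proof.
move=> _ _ rankT gamma_gt0; exists (fun x => (phi T gamma x)%:E); split.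
- by split=> [x|]; last exists 0.
- exact: phi_lower_semicontinuous.
- move=> x y t t_gt0 t_lt1; rewrite -!EFinM -EFinD lee_fin.
  by apply: phi_convex => //; rewrite t_gt0.
- move=> z; rewrite -(prox_objective_argmin gamma_gt0 rankT) -argmin_EFin.
  by congr argmin; apply/funext => x; rewrite -EFinD.
Qed.
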